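(* Let $G=(V,E)$ be a simple connected undirected graph and let $S=\{v_1,\dots,v_p\}$ be the output of Algorithm Stage-One on $G$. If $S$ is an independent set of $G$ and no vertex of $V\setminus S$ is adjacent to two or more vertices of $S$, then $S$ is a minimum dominating set of $G$, i.e. $|S|=\gamma(G)$.
   Context: A set $D\subseteq V$ is dominating if every vertex of $V\setminus D$ has a neighbor in $D$; $\gamma(G)$ is the minimum cardinality of a dominating set. An independent set is a set of pairwise non-adjacent vertices. For $v\in V$, $N(v)=\{u\in V:(u,v)\in E\}$; for $U\subseteq V$, $N(U)=\{v\in V\setminus U: v \text{ has a neighbor in } U\}$. Algorithm Stage-One: set $S_0=\emptyset$ and $h=0$. While $S_h$ is not a dominating set of $G$: increase $h$ by one; for each $v\in V\setminus S_{h-1}$ its active degree is $|N(v)\setminus (S_{h-1}\cup N(S_{h-1}))|$; if the maximum active degree over $V\setminus S_{h-1}$ is positive, let $v_h$ be any vertex of $V\setminus S_{h-1}$ of maximum active degree, otherwise let $v_h$ be any vertex of $V\setminus(S_{h-1}\cup N(S_{h-1}))$; set $S_h=S_{h-1}\cup\{v_h\}$. The output is $S=S_p$. *)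

(* A simple undirected graph is a symmetric irreflexive
   relation e on a finite vertex type T. *)
From mathcomp Require Import all_boot.
Set Implicit Arguments.
Unset Strict Implicit.
Unset Printing Implicit Defensive.

Section Graph.
Variables (T : finType) (e : rel T).

Definition simple_graph : Prop := symmetric e /\ irreflexive e.

Definition connected_graph : Prop := forall x y : T, connect e x y.

Definition nbh (v : T) : {set T} := [set u | e u v].

Definition nbhs (U : {set T}) : {set T} :=
  [set v | (v \notin U) && [exists u in U, e u v]].

Definition dominating (D : {set T}) : bool :=
  [forall v, (v \notin D) ==> [exists u in D, e u v]].

Definition independent (D : {set T}) : bool :=
  [forall u in D, forall v in D, ~~ e u v].

(* gamma(G): the minimum cardinality of a dominating set (V itself is one). *)
Definition gamma : nat :=
  #|[arg min_(D < [set: T] | dominating D) #|D|]|.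

Definition active_degree (S' : {set T}) (v : T) : nat :=
  #|nbh v :\: (S' :|: nbhs S')|.

(* S_h = {v_1, ..., v_h} for the sequence s = [v_1; ...; v_p] *)
Definition prefix_set (s : seq T) (h : nat) : {set T} := [set x in take h s].

(* The step choosing v = v_{h+1} from S_h is a legal step of Stage-One. *)
Definition stage_one_step (Sprev : {set T}) (v : T) : Prop :=
  ~~ dominating Sprev /\ v \notin Sprev /\
  if [exists x in ~: Sprev, 0 < active_degree Sprev x]
  then forall x, x \notin Sprev -> active_degree Sprev x <= active_degree Sprev v
  else v \notin Sprev :|: nbhs Sprev.

(* s = [v_1; ...; v_p] is a possible complete run of Algorithm Stage-One
   (any tie-breaking allowed); its output is S = [set x in s]. *)
Definition stage_one_run (s : seq T) : Prop :=
  (forall h, h < size s -> exists x0,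
     stage_one_step (prefix_set s h) (nth x0 s h)) /\
  dominating [set x in s].

End Graph.

From mathcomp Require Import all_boot.

(* An independent set S in which every outside vertex has at most one
   neighbour in S is no larger than any dominating set D: sending each vertex
   to a member of D dominating it is injective on S, because two distinct
   vertices of S are neither adjacent nor share a neighbour.  Since the output
   of Stage-One is dominating, it is therefore a minimum dominating set. *)

Section EfficientDomination.
Variables (T : finType) (e : rel T).

Definition dominator (D : {set T}) (v : T) : T :=
  if v \in D then v else odflt v [pick u in D | e u v].

Lemma dominatorP {D : {set T}} : dominating e D -> forall v : T,
  dominator D v \in D /\ (dominator D v = v \/ e (dominator D v) v).
Proof.
move=> domD v; move/forallP/(_ v): domD; rewrite /dominator.
case: ifP => [vD _ | vD /= /existsP exu]; first by split; [| left].
case: pickP => [u /andP[uD euv] | noD] /=; first by split; [| right].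
by case: exu => u /andP[uD euv]; move: (noD u); rewrite uD euv.
Qed.

Lemma independent_nonadj {S : {set T}} {u v : T} :
  independent e S -> u \in S -> v \in S -> e u v = false.
Proof.
move=> /forallP/(_ u) indS uS vS; move: indS; rewrite uS => /forallP/(_ v).
by rewrite vS => /negbTE.
Qed.

Variable S : {set T}.
Hypotheses (esym : symmetric e) (indS : independent e S)
  (privS : forall v, v \notin S -> #|nbh e v :&: S| <= 1).

Lemma closed_nbh_disjoint {v w d : T} : v \in S -> w \in S ->
  (d = v \/ e d v) -> (d = w \/ e d w) -> v = w.
Proof.
move=> vS wS [-> | edv] [dw | edw] //.
- by rewrite (independent_nonadj indS vS wS) in edw.
- by rewrite dw (independent_nonadj indS wS vS) in edv.
have dS : d \notin S.
  by apply/negP => dS; rewrite (independent_nonadj indS dS vS) in edv.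
apply/eqP; move: (privS _ dS); apply: contraTT => nvw; rewrite -ltnNge.
have sub : [set v; w] \subset nbh e d :&: S.
  by apply/subsetP => x; rewrite !inE => /orP[] /eqP ->; rewrite esym ?edv ?edw.
by apply: leq_trans (subset_leq_card sub); rewrite cards2 nvw.
Qed.

Lemma card_le_dominating (D : {set T}) : dominating e D -> #|S| <= #|D|.
Proof.
move=> domD; have inj : {in S &, injective (dominator D)}.
  move=> v w vS wS fvw; have [_ hv] := dominatorP domD v.
  have [_ hw] := dominatorP domD w.
  by apply: (closed_nbh_disjoint vS wS hv); rewrite fvw.
rewrite -(card_in_imset inj); apply: subset_leq_card.
by apply/subsetP => _ /imsetP[v _ ->]; case: (dominatorP domD v).
Qed.

End EfficientDomination.

Lemma gamma_eq_card (T : finType) (e : rel T) (S : {set T}) :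
  dominating e S -> (forall D, dominating e D -> #|S| <= #|D|) ->
  #|S| = gamma e.
Proof.
move=> domS minS; rewrite /gamma.
have domT : dominating e [set: T] by apply/forallP => v; rewrite inE.
case: arg_minnP => // D domD minD.
by apply/eqP; rewrite eqn_leq minS // minD.
Qed.

Theorem proposition2 (T : finType) (e : rel T) (s : seq T) :
  simple_graph e -> connected_graph e ->
  stage_one_run e s ->
  independent e [set x in s] ->
  (forall v, v \notin [set x in s] -> #|nbh e v :&: [set x in s]| <= 1) ->
  dominating e [set x in s] /\ #|[set x in s]| = gamma e.
Proof.
move=> [esym _] _ [_ domS] indS privS; split => //.
apply: gamma_eq_card => // D.
exact: card_le_dominating.
Qed.
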